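(* Let $m,n\ge1$ and $k$ be integers with $|k|_m=n$, and let $G=\langle a,b\mid a^m=1=b^n,\ b^{-1}ab=a^k\rangle$. Let $s$ be an odd prime with $\gcd(s,m)=1$, $\zeta$ a primitive $m$-th root of unity in $\overline{\mathbb{F}}_s$, and $q$ a power of $s$. Then the induced representation $\rho^G$ is realizable over $\mathbb{F}_q$ if and only if $q\equiv k^i\pmod m$ for some $i$ with $0\le i\le n-1$.
   Context: $|k|_m$ denotes the multiplicative order of $k$ modulo $m$. $\rho:\langle a\rangle\to\overline{\mathbb{F}}_s^*$ is given by $\rho(a)=\zeta$ and $\rho^G$ is the induced representation of $G$; concretely it acts on a space with basis $e_0,\dots,e_{n-1}$ by $ae_i=\zeta^{k^i}e_i$, $be_i=e_{i+1}$ (indices modulo $n$). A representation of $G$ over $\overline{\mathbb{F}}_s$ is realizable over a subfield $\mathbb{F}_q$ if it is equivalent (over $\overline{\mathbb{F}}_s$) to a matrix representation all of whose matrices have entries in $\mathbb{F}_q$. *)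

From HB Require Import structures.
From mathcomp Require Import all_boot all_order all_algebra all_fingroup all_solvable all_field all_character.
Set Implicit Arguments. Unset Strict Implicit. Unset Printing Implicit Defensive.
Import GRing.Theory Num.Theory.
Local Open Scope ring_scope.

Definition is_mult_order (k : int) (m n : nat) : Prop :=
  (0 < n)%N /\ (k ^+ n = 1 %[mod m%:Z])%Z /\
  (forall i : nat, (0 < i < n)%N -> ~ (k ^+ i = 1 %[mod m%:Z])%Z).

(* the representative of k in {0,..,m-1}, used as a nat exponent in the group *)
Definition kmod (k : int) (m : nat) : nat := `|(k %% m%:Z)%Z|%N.

(* matrix of rho^G(a): a e_i = zeta^(k^i) e_i *)
Definition rhoA (F : fieldType) (n : nat) (zeta : F) (k : int) : 'M[F]_n :=
  \matrix_(i < n, j < n) (if i == j then zeta ^ (k ^+ i) else 0).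

(* matrix of rho^G(b): b e_i = e_(i+1) (indices mod n), column convention *)
Definition rhoB (F : fieldType) (n : nat) : 'M[F]_n :=
  \matrix_(i < n, j < n) (if (val i == (val j).+1 %% n)%N then 1 else 0).

(* the subfield F_q of F: the roots of X^q - X *)
Definition inFq (F : fieldType) (q : nat) (x : F) : bool := x ^+ q == x.

Definition realizable_over (F : fieldType) (gT : finGroupType) (G : {group gT})
  (n : nat) (q : nat) (rG : mx_representation F G n) : Prop :=
  exists rG' : mx_representation F G n,
    (forall g, g \in G -> forall i j, inFq q (rG' g i j)) /\ mx_rsim rG rG'.

(* The eigenvalues of rho^G(a) are the n distinct powers zeta^(k^i), 0 <= i < n.
   If rho^G is equivalent to a representation over F_q, the spectrum of rho^G(a)
   is stable under the Frobenius x |-> x^q, so zeta^q = zeta^(k^i) for some i.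
   Conversely, if q = k^i mod m, the Frobenius permutes the eigenvalues by the
   cyclic shift r |-> r + i, which commutes with the cyclic permutation
   rho^G(b).  The Frobenius maps the (transposed) Vandermonde matrix X of the
   eigenvalues to its row-shifted copy, so conjugating rho^G(a) and rho^G(b) by
   X yields Frobenius-fixed matrices, i.e. matrices over F_q; these generate
   the conjugated representation. *)

From HB Require Import structures.
From mathcomp Require Import all_boot all_order all_algebra all_fingroup all_solvable all_field all_character.
Import GRing.Theory Num.Theory.
Set Implicit Arguments. Unset Strict Implicit. Unset Printing Implicit Defensive.
Local Open Scope ring_scope.

Section FrobeniusPower.
Variables (F : fieldType) (q : nat).

Definition frobenius_pow of [pchar F].-nat q := fun x : F => x ^+ q.

Variable pcharF_q : [pchar F].-nat q.

Fact frobenius_pow_is_nmod_morphism : nmod_morphism (frobenius_pow pcharF_q).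
Proof.
by split=> [|x y]; rewrite /frobenius_pow ?expr0n ?exprDn_pchar //; case: q pcharF_q.
Qed.

Fact frobenius_pow_is_monoid_morphism : monoid_morphism (frobenius_pow pcharF_q).
Proof. by split=> [|x y]; rewrite /frobenius_pow ?expr1n ?exprMn. Qed.

HB.instance Definition _ := GRing.isNmodMorphism.Build F F (frobenius_pow pcharF_q)
  frobenius_pow_is_nmod_morphism.
HB.instance Definition _ := GRing.isMonoidMorphism.Build F F (frobenius_pow pcharF_q)
  frobenius_pow_is_monoid_morphism.

End FrobeniusPower.

Section PrimitiveRootExprz.
Variables (F : fieldType) (m : nat) (zeta : F).
Hypotheses (m_gt0 : (0 < m)%N) (zeta_prim : m.-primitive_root zeta).

Lemma prim_root_exprz_mod (z : int) : zeta ^ z = zeta ^+ `|(z %% m%:Z)%Z|%N.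
Proof.
have m_neq0 : m%:Z != 0 by rewrite eqz_nat -lt0n.
have zeta_unit : zeta \is a GRing.unit.
  by rewrite -(unitrX_pos _ m_gt0) (prim_expr_order zeta_prim) unitr1.
rewrite {1}(divz_eq z m) exprzDr // [X in zeta ^ X]mulrC -exprz_exp.
rewrite -exprnP (prim_expr_order zeta_prim) exp1rz mul1r.
by rewrite -{1}(gez0_abs (modz_ge0 z m_neq0)).
Qed.

Lemma eq_prim_root_exprz (z1 z2 : int) :
  (zeta ^ z1 = zeta ^ z2) <-> (z1 = z2 %[mod m%:Z])%Z.
Proof.
have m_neq0 : m%:Z != 0 by rewrite eqz_nat -lt0n.
have mod_lt z : (`|(z %% m%:Z)%Z| < m)%N.
  by rewrite -ltz_nat gez0_abs ?modz_ge0 // ltz_mod.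
rewrite !prim_root_exprz_mod; split=> [/eqP|]; last by move->.
rewrite (eq_prim_root_expr zeta_prim) !modn_small // => /eqP eq_abs.
by rewrite -(gez0_abs (modz_ge0 z1 m_neq0)) -(gez0_abs (modz_ge0 z2 m_neq0)) eq_abs.
Qed.

End PrimitiveRootExprz.

Section MultOrder.
Variables (m n : nat) (k : int).
Hypothesis k_order : is_mult_order k m n.

Lemma expr_mod_mult_order (j : nat) : (k ^+ j = k ^+ (j %% n) %[mod m%:Z])%Z.
Proof.
case: k_order => _ [kn _].
rewrite {1}(divn_eq j n) exprD mulnC exprM -modzMml -modzXm kn modzXm expr1n.
by rewrite modzMml mul1r.
Qed.

Lemma expr_mult_order_inj (r t : nat) : (r < n)%N -> (t < n)%N ->
  (k ^+ r = k ^+ t %[mod m%:Z])%Z -> r = t.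
Proof.
case: k_order => _ [kn kn_min].
wlog le_rt : r t / (r <= t)%N.
  move=> wlog_le r_lt t_lt eq_rt; case: (leqP r t) => [le_rt|/ltnW le_tr].
    exact: wlog_le.
  exact/esym/wlog_le.
move=> r_lt t_lt eq_rt.
apply/eqP; rewrite eqn_leq le_rt leqNgt; apply/negP => lt_rt.
(* multiplying by k^(n-t) turns k^r = k^t into k^(r+n-t) = k^n = 1 with 0 < r+n-t < n *)
apply: (kn_min (r + (n - t))%N).
  by rewrite addn_gt0 subn_gt0 t_lt orbT -{2}(subnKC (ltnW t_lt)) ltn_add2r.
by rewrite exprD -modzMml eq_rt modzMml -exprD subnKC // ltnW.
Qed.

End MultOrder.

Section Eigenvalues.
Variable F : fieldType.

Lemma eigenvalue_intertwine m n (A : 'M[F]_m) (A' : 'M[F]_n) (B : 'M_(m, n)) a :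
  row_free B -> A *m B = B *m A' -> eigenvalue A a -> eigenvalue A' a.
Proof.
move=> freeB AB /eigenvalueP[v vA v_neq0]; apply/eigenvalueP; exists (v *m B).
  by rewrite -mulmxA -AB mulmxA vA scalemxAl.
by rewrite mulmx_free_eq0.
Qed.

Lemma eigenvalue_diag n (d : 'rV[F]_n) a :
  eigenvalue (diag_mx d) a = [exists i, a == d 0 i].
Proof.
rewrite eigenvalue_root_char char_poly_trig ?diag_mx_is_trig //.
under eq_bigr do rewrite mxE eqxx mulr1n.
rewrite -(big_map (fun i => d 0 i) xpredT (fun x => 'X - x%:P)) root_prod_XsubC.
by apply/mapP/existsP => [[i _ ->]|[i /eqP ->]]; exists i; rewrite ?mem_index_enum.
Qed.

End Eigenvalues.

Section FixedConjugation.
Variables (F : fieldType) (n : nat) (sg : {rmorphism F -> F}).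

Lemma map_mx_conj_fixed (A P X : 'M[F]_n) : X \in unitmx ->
  map_mx sg X = P *m X -> map_mx sg A *m P = P *m A ->
  map_mx sg (invmx X *m A *m X) = invmx X *m A *m X.
Proof.
move=> X_unit sgX sgA; set M := invmx X *m A *m X.
have XM : X *m M = A *m X by rewrite /M !mulmxA mulmxV ?mul1mx.
have sgX_unit : map_mx sg X \in unitmx by rewrite map_unitmx.
apply: (can_inj (mulKmx sgX_unit)) => /=.
by rewrite -map_mxM XM map_mxM sgX mulmxA sgA -!mulmxA -XM.
Qed.

Lemma map_mx_rowsub1 m (f : 'I_m -> 'I_n) : map_mx sg (rowsub f 1%:M) = rowsub f 1%:M.
Proof. by rewrite map_mxsub map_mx1. Qed.

Variables (y : 'I_n -> F) (f : 'I_n -> 'I_n).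
Hypothesis sg_y : forall r, sg (y r) = y (f r).

Lemma map_diag_mx_rowsub :
  map_mx sg (diag_mx (\row_r y r)) *m rowsub f 1%:M = rowsub f 1%:M *m diag_mx (\row_r y r).
Proof.
rewrite -rowsubE map_diag_mx mul_diag_mx; apply/matrixP=> r s; rewrite !mxE sg_y.
by case: eqP => [->|]; rewrite ?mulr1 ?mulr0.
Qed.

Lemma map_tr_Vandermonde :
  map_mx sg (Vandermonde n (\row_r y r))^T = rowsub f 1%:M *m (Vandermonde n (\row_r y r))^T.
Proof. by rewrite -rowsubE; apply/matrixP=> r c; rewrite !mxE rmorphXn sg_y. Qed.

End FixedConjugation.

Lemma tr_Vandermonde_unit (F : fieldType) n (y : 'I_n -> F) :
  injective y -> (Vandermonde n (\row_r y r))^T \in unitmx.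
Proof.
move=> y_inj; rewrite unitmxE det_tr det_Vandermonde unitfE.
apply/prodf_neq0 => i _; apply/prodf_neq0 => j lt_ij; rewrite !mxE subr_eq0.
by apply: contraTneq lt_ij => /y_inj ->; rewrite ltnn.
Qed.

Section Realizability.
Variables (F : fieldType) (gT : finGroupType) (G : {group gT}) (n : nat).

Lemma group_set_repr_fixed (rG : mx_representation F G n) (sg : {rmorphism F -> F}) :
  group_set [set g in G | map_mx sg (rG g) == rG g].
Proof.
apply/group_setP; split=> [|x y]; first by rewrite inE group1 repr_mx1 map_mx1 eqxx.
rewrite !inE => /andP[Gx /eqP sgx] /andP[Gy /eqP sgy].
by rewrite groupM // repr_mxM // map_mxM sgx sgy eqxx.
Qed.

Variables (rG : mx_representation F G n) (q : nat) (pcharF_q : [pchar F].-nat q).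
Local Notation frob := (frobenius_pow pcharF_q).

Lemma realizable_eigenvalue_frobenius x a : x \in G ->
  realizable_over q rG -> eigenvalue (rG x) a -> eigenvalue (rG x) (a ^+ q).
Proof.
move=> Gx [rG' [rG'_Fq [B _ freeB rGB]]].
have B_unit : B \in unitmx by rewrite -row_free_unit.
have frob_rG' : map_mx frob (rG' x) = rG' x.
  by apply/matrixP=> i j; rewrite mxE; apply/eqP/rG'_Fq.
have rG'B : rG' x *m invmx B = invmx B *m rG x.
  by rewrite -[rG' x](mulKmx B_unit) -rGB // !mulmxA mulmxK.
move=> /(eigenvalue_intertwine freeB (rGB x Gx)).
rewrite -(eigenvalue_map frob) frob_rG'.
by apply: eigenvalue_intertwine rG'B; rewrite row_free_unit unitmx_inv.
Qed.

Lemma realizable_over_conj (X : 'M[F]_n) (a b : gT) :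
  (<[a]> <*> <[b]>)%g = G -> X \in unitmx ->
  map_mx frob (invmx X *m rG a *m X) = invmx X *m rG a *m X ->
  map_mx frob (invmx X *m rG b *m X) = invmx X *m rG b *m X ->
  realizable_over q rG.
Proof.
move=> defG X_unit frob_a frob_b.
have Xinv_unit : invmx X \in unitmx by rewrite unitmx_inv.
pose rG' := rconj_repr rG Xinv_unit.
have rG'E g : rG' g = invmx X *m rG g *m X by rewrite rconj_mxE invmxK.
exists rG'; split; last first.
  exists X => [//||g Gg]; first by rewrite row_free_unit.
  by rewrite rG'E !mulmxA mulmxV // mul1mx.
have sub_fixed : G \subset group (group_set_repr_fixed rG' frob).
  have [Ga Gb] : a \in G /\ b \in G.
    by rewrite -defG !mem_gen // inE cycle_id ?orbT.
  by rewrite -{1}defG join_subG !cycle_subG !inE Ga Gb !rG'E frob_a frob_b !eqxx.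
move=> g Gg i j; have := subsetP sub_fixed g Gg.
rewrite inE => /andP[_ /eqP/matrixP/(_ i j)]; rewrite mxE => frob_gij.
by rewrite /inFq; apply/eqP; exact: frob_gij.
Qed.

End Realizability.

Section InducedRepresentation.
Variables (F : fieldType) (m n' : nat) (k : int) (zeta : F).
Hypotheses (m_gt0 : (0 < m)%N) (k_order : is_mult_order k m n'.+1).
Hypothesis zeta_prim : m.-primitive_root zeta.
Local Notation n := n'.+1.
Local Notation ev := (fun r : 'I_n => zeta ^ (k ^+ r)).

Lemma rhoA_diag : rhoA n zeta k = diag_mx (\row_r ev r).
Proof. by apply/matrixP=> r c; rewrite !mxE; case: eqP => [->|]; rewrite ?mulr1n ?mulr0n. Qed.

Lemma eigenvalue_rhoA a : eigenvalue (rhoA n zeta k) a = [exists r : 'I_n, a == ev r].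
Proof. by rewrite rhoA_diag eigenvalue_diag; apply: eq_existsb => r; rewrite mxE. Qed.

Lemma rhoB_rowsub : rhoB F n = rowsub (fun r : 'I_n => r + inZp n') 1%:M.
Proof.
apply/matrixP=> r s; rewrite !mxE.
suff -> : (val r == (val s).+1 %% n)%N = (r + inZp n' == s) by case: (_ == _).
apply/eqP/eqP => [rs|<-] /=.
  by apply: val_inj => /=; rewrite modnDmr rs modnDml addSn -addnS modnDr modn_small // ltn_ord.
by rewrite modnDmr -[(_ %% n).+1]addn1 modnDml -addnA addn1 modnDr modn_small.
Qed.

Lemma ev_inj : injective ev.
Proof.
move=> r t /(eq_prim_root_exprz m_gt0 zeta_prim) eq_rt; apply: val_inj.
exact: (expr_mult_order_inj k_order (ltn_ord r) (ltn_ord t) eq_rt).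
Qed.

Lemma expr_ev_shift (q i : nat) : (q%:Z = k ^+ i %[mod m%:Z])%Z ->
  forall r, ev r ^+ q = ev (r + inZp i).
Proof.
move=> qi r; rewrite exprnP exprz_exp; apply/(eq_prim_root_exprz m_gt0 zeta_prim).
rewrite /= modnDmr -(expr_mod_mult_order k_order) exprD.
by rewrite -modzMmr qi modzMmr.
Qed.

Variables (gT : finGroupType) (G : {group gT}) (rG : mx_representation F G n).
Variables (q : nat) (pcharF_q : [pchar F].-nat q).

Lemma realizable_induced_mod_order (a : gT) :
  a \in G -> rG a = rhoA n zeta k -> realizable_over q rG ->
  exists2 i, (i < n)%N & (q%:Z = k ^+ i %[mod m%:Z])%Z.
Proof.
move=> Ga rGa realizable_rG.
have zeta_eig : eigenvalue (rG a) zeta.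
  by rewrite rGa eigenvalue_rhoA; apply/existsP; exists ord0; rewrite expr0 expr1z.
have := realizable_eigenvalue_frobenius pcharF_q Ga realizable_rG zeta_eig.
rewrite rGa eigenvalue_rhoA => /existsP[r /eqP]; rewrite exprnP.
by move/(eq_prim_root_exprz m_gt0 zeta_prim); exists r.
Qed.

Lemma realizable_induced (a b : gT) (i : nat) :
  (<[a]> <*> <[b]>)%g = G -> rG a = rhoA n zeta k -> rG b = rhoB F n ->
  (q%:Z = k ^+ i %[mod m%:Z])%Z -> realizable_over q rG.
Proof.
move=> defG rGa rGb qi.
pose frob := frobenius_pow pcharF_q.
pose shift (r : 'I_n) := r + inZp i.
have frob_ev r : frob (ev r) = ev (shift r) by exact: expr_ev_shift.
have X_unit := tr_Vandermonde_unit ev_inj.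
have frobX := map_tr_Vandermonde frob_ev.
apply: (realizable_over_conj defG X_unit).
  by apply: map_mx_conj_fixed X_unit frobX _; rewrite rGa rhoA_diag map_diag_mx_rowsub.
apply: map_mx_conj_fixed X_unit frobX _.
rewrite rGb rhoB_rowsub map_mx_rowsub1 !mul_rowsub_mx !mul1mx -!rowsub_comp.
by apply: eq_rowsub => r /=; rewrite /shift addrAC.
Qed.

End InducedRepresentation.

Theorem theorem2p5 (m n : nat) (k : int)
  (gT : finGroupType) (G : {group gT}) (a b : gT)
  (s q : nat) (F : closedFieldType) (zeta : F)
  (rG : mx_representation F G n) :
  (0 < m)%N -> (0 < n)%N -> is_mult_order k m n ->
  (* G = < a, b | a^m = 1 = b^n, b^-1 a b = a^k > with generators a, b *)
  (G \isog Grp (x : y : x ^+ m, y ^+ n, x ^ y = x ^+ kmod k m))%g ->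
  (<[a]> <*> <[b]>)%g = G -> (a ^+ m = 1)%g -> (b ^+ n = 1)%g ->
  (a ^ b = a ^+ kmod k m)%g ->
  (* F is an algebraic closure of F_s, s an odd prime coprime to m *)
  prime s -> odd s -> coprime s m -> (s \in [pchar F])%N ->
  (forall x : F, exists e : nat, (0 < e)%N /\ x ^+ (s ^ e) = x) ->
  m.-primitive_root zeta ->
  (exists e : nat, (0 < e)%N /\ q = (s ^ e)%N) ->
  (* rG is the induced representation rho^G *)
  rG a = rhoA n zeta k -> rG b = rhoB F n ->
  realizable_over q rG <->
  (exists i : nat, (i <= n - 1)%N /\ (q%:Z = k ^+ i %[mod m%:Z])%Z).
Proof.
move=> m_gt0 n_gt0 k_order _ defG _ _ _ s_prime _ _ s_char _ zeta_prim.
move=> [e [_ ->]] rGa rGb.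
have pchar_q : [pchar F].-nat (s ^ e)%N by rewrite pnatX pnatE // s_char.
case: n n_gt0 k_order rG rGa rGb => // n' _ k_order rG rGa rGb.
have Ga : a \in G by rewrite -defG mem_gen // inE cycle_id.
split=> [realizable_rG|[i [_ qi]]].
  have [i lt_i qi] :=
    realizable_induced_mod_order m_gt0 zeta_prim pchar_q Ga rGa realizable_rG.
  by exists i; rewrite subn1.
exact: (realizable_induced m_gt0 k_order zeta_prim pchar_q defG rGa rGb qi).
Qed.
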